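(* Let $\Gamma\subseteq\mathbb R^n$ be an open convex set, $S\subseteq\Gamma$ a nonempty convex set, and $f:\Gamma\to\mathbb R$ a continuously differentiable function that is pseudoconvex on $\Gamma$. Let $\bar S=\arg\min\{f(x)\mid x\in S\}$ and $\bar x\in\bar S$. Define \[ \hat T_1:=\{x\in S\mid \nabla f(\bar x)^T(x-\bar x)=0,\ \exists\, p(x)>0:\ \nabla f(x)=p(x)\nabla f(\bar x)\}, \] \[ \hat T_2:=\{x\in S\mid \nabla f(\bar x)^T(x-\bar x)\le0,\ \exists\, p(x)>0:\ \nabla f(x)=p(x)\nabla f(\bar x)\}. \] Then $\bar S=\hat T_1=\hat T_2$.
   Context: A differentiable function $f$ on an open set $\Gamma$ is pseudoconvex on $\Gamma$ iff for all $x,y\in\Gamma$, $f(y)<f(x)$ implies $\nabla f(x)^T(y-x)<0$. *)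

From Stdlib Require Vectors.Fin.
From Stdlib Require Import Reals Lra.
Open Scope R_scope.

Definition Vec (n : nat) : Type := Fin.t n -> R.

Fixpoint dot (n : nat) : Vec n -> Vec n -> R :=
  match n with
  | O => fun _ _ => 0
  | Datatypes.S m => fun u v =>
      u Fin.F1 * v Fin.F1 + dot m (fun i => u (Fin.FS i)) (fun i => v (Fin.FS i))
  end.
Arguments dot {n} _ _.

Definition vsub {n} (u v : Vec n) : Vec n := fun i => u i - v i.
Definition vadd {n} (u v : Vec n) : Vec n := fun i => u i + v i.
Definition vscal {n} (a : R) (u : Vec n) : Vec n := fun i => a * u i.

Definition vnorm {n} (u : Vec n) : R := sqrt (dot u u).

Definition is_open {n} (G : Vec n -> Prop) : Prop :=
  forall x, G x -> exists r, 0 < r /\ forall y, vnorm (vsub y x) < r -> G y.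

Definition is_convex {n} (G : Vec n -> Prop) : Prop :=
  forall x y t, G x -> G y -> 0 <= t <= 1 -> G (vadd x (vscal t (vsub y x))).

Definition has_gradient {n} (f : Vec n -> R) (g : Vec n) (x : Vec n) : Prop :=
  forall eps, 0 < eps -> exists delta, 0 < delta /\
    forall y, vnorm (vsub y x) < delta ->
      Rabs (f y - f x - dot g (vsub y x)) <= eps * vnorm (vsub y x).

Definition C1_on {n} (G : Vec n -> Prop) (f : Vec n -> R) (df : Vec n -> Vec n) : Prop :=
  (forall x, G x -> has_gradient f (df x) x) /\
  (forall x, G x -> forall eps, 0 < eps -> exists delta, 0 < delta /\
     forall y, G y -> vnorm (vsub y x) < delta -> vnorm (vsub (df y) (df x)) < eps).

Definition pseudoconvex_on {n} (G : Vec n -> Prop) (f : Vec n -> R) (df : Vec n -> Vec n) : Prop :=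
  forall x y, G x -> G y -> f y < f x -> dot (df x) (vsub y x) < 0.

Definition argmin_on {n} (f : Vec n -> R) (S : Vec n -> Prop) (x : Vec n) : Prop :=
  S x /\ forall y, S y -> f x <= f y.

Definition T1hat {n} (f : Vec n -> R) (df : Vec n -> Vec n) (S : Vec n -> Prop) (xbar x : Vec n) : Prop :=
  S x /\ dot (df xbar) (vsub x xbar) = 0 /\
  exists p, 0 < p /\ df x = vscal p (df xbar).

Definition T2hat {n} (f : Vec n -> R) (df : Vec n -> Vec n) (S : Vec n -> Prop) (xbar x : Vec n) : Prop :=
  S x /\ dot (df xbar) (vsub x xbar) <= 0 /\
  exists p, 0 < p /\ df x = vscal p (df xbar).

(* If [x] and [xbar] both minimise [f] on [S], first-order optimality at [xbar] and
   pseudoconvexity at [xbar] show that every direction [d] with [∇f(xbar)·d > 0] satisfies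
   [∇f(x)·d >= 0] (otherwise a small step from [x] along [d] would leave [f] below the
   minimum, forcing [∇f(xbar)·(x + t d - xbar) < 0]).  Such an inclusion of half-spaces
   makes [∇f(x)] a nonnegative multiple of [∇f(xbar)]; the multiple is positive because a
   stationary point of a pseudoconvex function is a global minimum on the open set [Γ],
   where the gradient must then vanish.  Finally [∇f(xbar)·(x - xbar)] is [>= 0] by
   optimality of [xbar] and [<= 0] by optimality of [x].  Conversely, for [x] in [T2hat]
   with [f x > f xbar], pseudoconvexity at [x] would give [p ∇f(xbar)·(xbar - x) < 0]. *)
From Stdlib Require Import Reals.
From Stdlib Require Import Lra Psatz FunctionalExtensionality.
Open Scope R_scope.

Definition vzero {n} : Vec n := fun _ => 0.

Lemma dot_comm {n} (u v : Vec n) : dot u v = dot v u.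
Proof. induction n; simpl; [reflexivity | rewrite IHn; ring]. Qed.

Lemma dot_addl {n} (u v w : Vec n) : dot (vadd u v) w = dot u w + dot v w.
Proof.
  induction n; simpl; [ring |].
  unfold vadd in *; rewrite (IHn (fun i => u (Fin.FS i))); ring.
Qed.

Lemma dot_subl {n} (u v w : Vec n) : dot (vsub u v) w = dot u w - dot v w.
Proof.
  induction n; simpl; [ring |].
  unfold vsub in *; rewrite (IHn (fun i => u (Fin.FS i))); ring.
Qed.

Lemma dot_scall {n} a (u w : Vec n) : dot (vscal a u) w = a * dot u w.
Proof.
  induction n; simpl; [ring |].
  unfold vscal in *; rewrite (IHn (fun i => u (Fin.FS i))); ring.
Qed.

Lemma dot_addr {n} (w u v : Vec n) : dot w (vadd u v) = dot w u + dot w v.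
Proof. rewrite dot_comm, dot_addl, !(dot_comm _ w); reflexivity. Qed.

Lemma dot_subr {n} (w u v : Vec n) : dot w (vsub u v) = dot w u - dot w v.
Proof. rewrite dot_comm, dot_subl, !(dot_comm _ w); reflexivity. Qed.

Lemma dot_scalr {n} a (w u : Vec n) : dot w (vscal a u) = a * dot w u.
Proof. rewrite dot_comm, dot_scall, dot_comm; reflexivity. Qed.

Lemma dot0r {n} (u : Vec n) : dot u vzero = 0.
Proof. induction n; simpl; [| rewrite IHn]; unfold vzero; ring. Qed.

Lemma dot0l {n} (u : Vec n) : dot vzero u = 0.
Proof. rewrite dot_comm; apply dot0r. Qed.

Lemma dot_self_ge0 {n} (u : Vec n) : 0 <= dot u u.
Proof. induction n; simpl; [lra | specialize (IHn (fun i => u (Fin.FS i))); nra]. Qed.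

Lemma dot_self_eq0 {n} (u : Vec n) : dot u u = 0 -> u = vzero.
Proof.
  intro H; apply functional_extensionality; intro i; unfold vzero.
  induction n; simpl in H.
  - exact (Fin.case0 (fun _ => u i = 0) i).
  - pose proof (dot_self_ge0 (fun i => u (Fin.FS i))).
    apply (Fin.caseS' i); [nra |].
    intro j; apply (IHn (fun i => u (Fin.FS i))); nra.
Qed.

Lemma dot_self_gt0 {n} (u : Vec n) : u <> vzero -> 0 < dot u u.
Proof.
  intro Hu; destruct (dot_self_ge0 u) as [h | h]; [exact h |].
  now destruct Hu; apply dot_self_eq0.
Qed.

Lemma vnorm_scal {n} t (d : Vec n) : 0 <= t -> vnorm (vscal t d) = t * vnorm d.
Proof.
  intro Ht; unfold vnorm; rewrite dot_scall, dot_scalr, <- Rmult_assoc.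
  rewrite sqrt_mult by (nra || apply dot_self_ge0).
  now rewrite sqrt_square.
Qed.

Lemma vnorm_gt0 {n} (d : Vec n) : d <> vzero -> 0 < vnorm d.
Proof. intro Hd; apply sqrt_lt_R0, dot_self_gt0, Hd. Qed.

Lemma vsub_vaddl {n} (x v : Vec n) : vsub (vadd x v) x = v.
Proof. apply functional_extensionality; intro i; unfold vsub, vadd; ring. Qed.

Lemma vsub_vadd {n} (x v y : Vec n) : vsub (vadd x v) y = vadd (vsub x y) v.
Proof. apply functional_extensionality; intro i; unfold vsub, vadd; ring. Qed.

Lemma dot_vsub_swap {n} (w x y : Vec n) : dot w (vsub y x) = - dot w (vsub x y).
Proof. rewrite !dot_subr; ring. Qed.

Lemma vscal1 {n} (u : Vec n) : vscal 1 u = u.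
Proof. apply functional_extensionality; intro i; unfold vscal; ring. Qed.

Lemma vscal0 {n} (u : Vec n) : vscal 0 u = vzero.
Proof. apply functional_extensionality; intro i; unfold vscal, vzero; ring. Qed.

Lemma Rlt_mult_of_lt_div t r c : 0 < c -> t < r / c -> t * c < r.
Proof.
  intros Hc Ht; replace r with (r / c * c) by (field; lra).
  now apply Rmult_lt_compat_r.
Qed.

Lemma has_gradient_descent {n} (f : Vec n -> R) a x d :
  has_gradient f a x -> dot a d < 0 ->
  exists delta, 0 < delta /\ forall t, 0 < t < delta -> f (vadd x (vscal t d)) < f x.
Proof.
  intros Hg Had.
  assert (HN : 0 < vnorm d).
  { apply vnorm_gt0; intro Hd; rewrite Hd, dot0r in Had; lra. }
  destruct (Hg (- dot a d / (2 * vnorm d))) as [delta [Hdelta Hy]].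
  { apply Rdiv_lt_0_compat; lra. }
  exists (delta / vnorm d); split; [apply Rdiv_lt_0_compat; lra |].
  intros t [Ht Htd].
  specialize (Hy (vadd x (vscal t d))).
  rewrite vsub_vaddl, vnorm_scal, dot_scalr in Hy by lra.
  specialize (Hy (Rlt_mult_of_lt_div _ _ _ HN Htd)).
  replace (- dot a d / (2 * vnorm d) * (t * vnorm d)) with (- (t * dot a d) / 2) in Hy
    by (field; lra).
  pose proof (Rle_abs (f (vadd x (vscal t d)) - f x - t * dot a d)).
  nra.
Qed.

Lemma open_descent {n} (G : Vec n -> Prop) (f : Vec n -> R) a x d :
  is_open G -> G x -> has_gradient f a x -> dot a d < 0 ->
  exists t, 0 < t /\ G (vadd x (vscal t d)) /\ f (vadd x (vscal t d)) < f x.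
Proof.
  intros HG Gx Hg Had.
  destruct (has_gradient_descent f a x d Hg Had) as [delta [Hdelta Hdesc]].
  destruct (HG x Gx) as [r [Hr Hball]].
  pose proof (sqrt_pos (dot d d)) as HN; fold (vnorm d) in HN.
  set (s := r / (vnorm d + 1)).
  assert (Hs : 0 < s) by (apply Rdiv_lt_0_compat; lra).
  set (t := Rmin delta s / 2).
  assert (Ht : 0 < t < delta /\ t < s).
  { pose proof (Rmin_glb_lt _ _ _ Hdelta Hs).
    pose proof (Rmin_l delta s); pose proof (Rmin_r delta s); unfold t; lra. }
  exists t; split; [lra | split; [| now apply Hdesc]].
  apply Hball; rewrite vsub_vaddl, vnorm_scal by lra.
  pose proof (Rlt_mult_of_lt_div t r (vnorm d + 1) ltac:(lra) (proj2 Ht)).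
  nra.
Qed.

Lemma argmin_first_order {n} (S : Vec n -> Prop) f (b z x : Vec n) :
  is_convex S -> argmin_on f S z -> has_gradient f b z -> S x -> 0 <= dot b (vsub x z).
Proof.
  intros HS [Sz Hmin] Hg Sx.
  destruct (Rle_or_lt 0 (dot b (vsub x z))) as [h | h]; [exact h | exfalso].
  destruct (has_gradient_descent f b z _ Hg h) as [delta [Hdelta Hdesc]].
  set (t := Rmin delta 1 / 2).
  assert (Ht : 0 < t < delta /\ t <= 1).
  { pose proof (Rmin_l delta 1); pose proof (Rmin_r delta 1).
    pose proof (Rmin_glb_lt _ _ _ Hdelta Rlt_0_1); unfold t; lra. }
  specialize (Hmin (vadd z (vscal t (vsub x z))) (HS z x t Sz Sx ltac:(lra))).
  specialize (Hdesc t (proj1 Ht)); lra.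
Qed.

Lemma global_min_open_gradient {n} (G : Vec n -> Prop) f (b z : Vec n) :
  is_open G -> G z -> has_gradient f b z -> (forall y, G y -> f z <= f y) -> b = vzero.
Proof.
  intros HG Gz Hg Hmin.
  destruct (dot_self_ge0 b) as [h | h]; [exfalso | now apply dot_self_eq0].
  assert (Hd : dot b (vscal (-1) b) < 0) by (rewrite dot_scalr; lra).
  destruct (open_descent G f b z _ HG Gz Hg Hd) as [t [_ [Gy Hfy]]].
  specialize (Hmin _ Gy); lra.
Qed.

Lemma pseudoconvex_stationary_min {n} (G : Vec n -> Prop) f df x :
  pseudoconvex_on G f df -> G x -> df x = vzero -> forall y, G y -> f x <= f y.
Proof.
  intros Hpc Gx Hdx y Gy.
  destruct (Rle_or_lt (f x) (f y)) as [h | h]; [exact h |].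
  specialize (Hpc x y Gx Gy h); rewrite Hdx, dot0l in Hpc; lra.
Qed.

(* The component [c] of [a] orthogonal to [b] vanishes: testing [d = e b - c] gives
   [c·c <= e (a·b)] for every [e > 0]. *)
Lemma halfspace_incl_multiple {n} (a b : Vec n) :
  b <> vzero -> (forall d, 0 < dot b d -> 0 <= dot a d) ->
  exists p, 0 <= p /\ a = vscal p b.
Proof.
  intros Hb Hincl.
  pose proof (dot_self_gt0 b Hb) as Hbb.
  set (p := dot a b / dot b b).
  set (c := vsub a (vscal p b)).
  assert (Hbc : dot b c = 0).
  { unfold c, p; rewrite dot_subr, dot_scalr, (dot_comm b a); field; lra. }
  assert (Hac : dot a c = dot c c).
  { unfold c at 2; rewrite dot_subl, dot_scall, Hbc; ring. }
  assert (Hab : 0 <= dot a b) by (apply Hincl, Hbb).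
  assert (Hcc : forall e, 0 < e -> dot c c <= e * dot a b).
  { intros e He.
    assert (Hd : 0 < dot b (vsub (vscal e b) c)) by (rewrite dot_subr, dot_scalr; nra).
    specialize (Hincl _ Hd); rewrite dot_subr, dot_scalr, Hac in Hincl; lra. }
  assert (Hc : c = vzero).
  { apply dot_self_eq0, Rle_antisym; [| apply dot_self_ge0].
    destruct (Rle_or_lt (dot c c) 0) as [h | h]; [exact h | exfalso].
    destruct (Req_dec (dot a b) 0) as [h0 | h0].
    - specialize (Hcc 1 Rlt_0_1); lra.
    - specialize (Hcc (dot c c / (2 * dot a b)) ltac:(apply Rdiv_lt_0_compat; lra)).
      replace (dot c c / (2 * dot a b) * dot a b) with (dot c c / 2) in Hcc
        by (field; lra); lra. }
  exists p; split.
  - unfold p; apply Rmult_le_pos; [exact Hab | left; apply Rinv_0_lt_compat, Hbb].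
  - apply functional_extensionality; intro i.
    apply (f_equal (fun v => v i)) in Hc; unfold c, vsub, vzero in Hc; lra.
Qed.

Section Argmin.

Variables (n : nat) (G S : Vec n -> Prop) (f : Vec n -> R) (df : Vec n -> Vec n).
Hypotheses (HGopen : is_open G) (HSsub : forall x, S x -> G x) (HSconv : is_convex S).
Hypothesis Hgrad : forall x, G x -> has_gradient f (df x) x.
Hypothesis Hpc : pseudoconvex_on G f df.
Variable xbar : Vec n.
Hypothesis Hxbar : argmin_on f S xbar.

Lemma argmin_value x : argmin_on f S x -> f x = f xbar.
Proof.
  intros [Sx Hx]; destruct Hxbar as [Sxbar Hxb].
  specialize (Hx _ Sxbar); specialize (Hxb _ Sx); lra.
Qed.

Lemma argmin_stationary_transfer x z :
  argmin_on f S x -> argmin_on f S z -> df z = vzero -> df x = vzero.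
Proof.
  intros Hx Hz Hdz.
  assert (Gx : G x) by apply HSsub, Hx.
  apply (global_min_open_gradient G f _ x HGopen Gx (Hgrad x Gx)).
  intros y Gy; rewrite (argmin_value x Hx), <- (argmin_value z Hz).
  apply (pseudoconvex_stationary_min G f df); auto; apply HSsub, Hz.
Qed.

Lemma argmin_gradient_halfspace x :
  argmin_on f S x -> forall d, 0 < dot (df xbar) d -> 0 <= dot (df x) d.
Proof.
  intros Hx d Hbd.
  destruct (Rle_or_lt 0 (dot (df x) d)) as [h | h]; [exact h | exfalso].
  assert (Gx : G x) by apply HSsub, Hx.
  assert (Gxbar : G xbar) by apply HSsub, Hxbar.
  destruct (open_descent G f _ x d HGopen Gx (Hgrad x Gx) h) as [t [Ht [Gy Hfy]]].
  rewrite (argmin_value x Hx) in Hfy.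
  specialize (Hpc xbar _ Gxbar Gy Hfy).
  rewrite vsub_vadd, dot_addr, dot_scalr in Hpc.
  pose proof (argmin_first_order S f _ xbar x HSconv Hxbar
                (Hgrad xbar Gxbar) (proj1 Hx)).
  nra.
Qed.

Lemma argmin_gradient_multiple x :
  argmin_on f S x -> exists p, 0 < p /\ df x = vscal p (df xbar).
Proof.
  intro Hx.
  destruct (Req_dec (dot (df xbar) (df xbar)) 0) as [Hb0 | Hb].
  - apply dot_self_eq0 in Hb0; exists 1; split; [lra |].
    now rewrite vscal1, Hb0; apply (argmin_stationary_transfer x xbar).
  - assert (Hb0 : df xbar <> vzero) by (intro E; rewrite E, dot0r in Hb; lra).
    destruct (halfspace_incl_multiple _ _ Hb0 (argmin_gradient_halfspace x Hx))
      as [p [[Hp | Hp0] Hdx]].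
    + now exists p.
    + destruct Hb0; apply (argmin_stationary_transfer xbar x); auto.
      now rewrite Hdx, <- Hp0, vscal0.
Qed.

Lemma argmin_T1hat x : argmin_on f S x -> T1hat f df S xbar x.
Proof.
  intro Hx.
  destruct (argmin_gradient_multiple x Hx) as [p [Hp Hdx]].
  assert (Gx : G x) by apply HSsub, Hx.
  assert (Gxbar : G xbar) by apply HSsub, Hxbar.
  pose proof (argmin_first_order S f _ xbar x HSconv Hxbar
                (Hgrad xbar Gxbar) (proj1 Hx)) as Hge.
  pose proof (argmin_first_order S f _ x xbar HSconv Hx
                (Hgrad x Gx) (proj1 Hxbar)) as Hle.
  rewrite Hdx, dot_scall, dot_vsub_swap in Hle.
  split; [apply Hx | split; [nra | exists p; auto]].
Qed.

Lemma T2hat_argmin x : T2hat f df S xbar x -> argmin_on f S x.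
Proof.
  intros [Sx [Hle [p [Hp Hdx]]]]; split; [exact Sx |].
  intros y Sy; apply Rle_trans with (f xbar); [| apply Hxbar, Sy].
  destruct (Rle_or_lt (f x) (f xbar)) as [h | h]; [exact h | exfalso].
  specialize (Hpc x xbar (HSsub x Sx) (HSsub xbar (proj1 Hxbar)) h).
  rewrite Hdx, dot_scall, dot_vsub_swap in Hpc; nra.
Qed.

End Argmin.

Theorem corollary1 (n : nat) (G Sset : Vec n -> Prop) (f : Vec n -> R) (df : Vec n -> Vec n)
  (HGopen : is_open G) (HGconv : is_convex G)
  (HSsub : forall x, Sset x -> G x) (HSne : exists x, Sset x) (HSconv : is_convex Sset)
  (Hf : C1_on G f df) (Hpc : pseudoconvex_on G f df)
  (xbar : Vec n) (Hxbar : argmin_on f Sset xbar) :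
  (forall x, argmin_on f Sset x <-> T1hat f df Sset xbar x) /\
  (forall x, argmin_on f Sset x <-> T2hat f df Sset xbar x).
Proof.
  destruct Hf as [Hgrad _].
  pose proof (argmin_T1hat n G Sset f df HGopen HSsub HSconv Hgrad Hpc xbar Hxbar) as AT1.
  pose proof (T2hat_argmin n G Sset f df HSsub Hpc xbar Hxbar) as T2A.
  assert (T1T2 : forall x, T1hat f df Sset xbar x -> T2hat f df Sset xbar x).
  { intros x [Sx [H0 Hp]]; repeat split; auto; lra. }
  split; intro x; split; intro Hx.
  - exact (AT1 x Hx).
  - exact (T2A x (T1T2 x Hx)).
  - exact (T1T2 x (AT1 x Hx)).
  - exact (T2A x Hx).
Qed.
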